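(* Let $\kappa,\nu,\mu,\theta$ be cardinals, and suppose that a partition $p:[\kappa]^2\to\mu$ and a coloring $c:[\kappa]^2\to\theta$ have a common coarsening $q:[\kappa]^2\to\nu$ that is not constant. Then $c$ does not witness $\kappa\nrightarrow_p[\kappa]^2_\theta$.
   Context: $[\kappa]^2$ denotes the set of pairs $(\alpha,\beta)$ with $\alpha<\beta<\kappa$. For functions $q:X\to\nu$ and $p:X\to\mu$, $q$ is a coarsening of $p$ iff $p(x)=p(y)$ implies $q(x)=q(y)$ for all $x,y\in X$. Given a partition $p:[\kappa]^2\to\mu$, a coloring $c:[\kappa]^2\to\theta$ witnesses $\kappa\nrightarrow_p[\kappa]^2_\theta$ iff for every $A\subseteq\kappa$ with $|A|=\kappa$ and every function $\tau:\mu\to\theta$ there is a pair $(\alpha,\beta)$ with $\alpha<\beta$ both in $A$ such that $c(\alpha,\beta)=\tau(p(\alpha,\beta))$. *)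

(* A cardinal kappa is modelled as a type K equipped with a
   strict well-order lt that is an initial ordinal (no element's proper
   initial segment is equinumerous to K). The other cardinals nu, mu, theta
   are modelled as arbitrary types (sets of colours). Functions on [kappa]^2
   are curried functions K -> K -> X, of which only the values at pairs
   (a, b) with lt a b matter. *)
From Stdlib Require Import Relations Wellfounded.

Definition is_cardinal (K : Type) (lt : K -> K -> Prop) : Prop :=
  (forall a, ~ lt a a) /\
  (forall a b c, lt a b -> lt b c -> lt a c) /\
  (forall a b, lt a b \/ a = b \/ lt b a) /\
  well_founded lt /\
  (forall a : K, ~ exists f : K -> {b : K | lt b a},
       forall x y, f x = f y -> x = y).

Definition coarsening {K X Y : Type} (lt : K -> K -> Prop)
  (q : K -> K -> Y) (p : K -> K -> X) : Prop :=
  forall a b a' b', lt a b -> lt a' b' ->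
    p a b = p a' b' -> q a b = q a' b'.

Definition nonconstant {K Y : Type} (lt : K -> K -> Prop)
  (q : K -> K -> Y) : Prop :=
  exists a b a' b', lt a b /\ lt a' b' /\ q a b <> q a' b'.

Definition full_size {K : Type} (A : K -> Prop) : Prop :=
  exists f : {x : K | A x} -> K,
    (forall x y, f x = f y -> x = y) /\ (forall k, exists x, f x = k).

Definition witnesses {K M Th : Type} (lt : K -> K -> Prop)
  (p : K -> K -> M) (c : K -> K -> Th) : Prop :=
  forall A : K -> Prop, full_size A ->
  forall tau : M -> Th,
    exists a b, A a /\ A b /\ lt a b /\ c a b = tau (p a b).

(** Pairs in one [p]-class lie in one [q]-class, and [c] takes disjoint sets
   of values on distinct [q]-classes.  Since [q] is not constant, the colour
   of any pair outside a given [q]-class is never taken inside it, so every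
   [p]-class misses some colour of [c].  Choosing such a missed colour for
   each [p]-class gives a [tau] that no pair of [K] realises. *)

From Stdlib Require Import Classical ClassicalEpsilon.

Set Implicit Arguments.

Section CommonCoarsening.

Variables (K N M Th : Type) (lt : K -> K -> Prop).
Variables (p : K -> K -> M) (c : K -> K -> Th) (q : K -> K -> N).

Lemma nonconstant_avoid (v : N) :
  nonconstant lt q -> exists a b, lt a b /\ q a b <> v.
Proof.
  intros [a [b [a' [b' [Hab [Hab' Hne]]]]]].
  destruct (classic (q a b = v)) as [<- | Hv].
  - exists a', b'; split; [exact Hab' | congruence].
  - exists a, b; split; assumption.
Qed.

Hypotheses (coarse_p : coarsening lt q p) (coarse_c : coarsening lt q c).
Hypothesis (q_nonconstant : nonconstant lt q).

Lemma coarsening_class_avoids_colour (m : M) :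
  exists t, forall a b, lt a b -> p a b = m -> c a b <> t.
Proof.
  destruct (classic (exists a b, lt a b /\ p a b = m))
    as [[a0 [b0 [Hab0 Hm0]]] | Hempty].
  - destruct (nonconstant_avoid (q a0 b0) q_nonconstant)
      as [a1 [b1 [Hab1 Hq1]]].
    exists (c a1 b1); intros a b Hab Hm Hc.
    apply Hq1.
    rewrite <- (coarse_c Hab Hab1 Hc).
    apply coarse_p; [exact Hab | exact Hab0 | congruence].
  - destruct q_nonconstant as [a1 [b1 [_ [_ [Hab1 _]]]]].
    exists (c a1 b1); intros a b Hab Hm _.
    apply Hempty; eauto.
Qed.

Lemma avoiding_colouring_exists :
  exists tau : M -> Th, forall a b, lt a b -> c a b <> tau (p a b).
Proof.
  destruct (choice _ coarsening_class_avoids_colour) as [tau Htau].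
  exists tau; intros a b Hab; exact (Htau (p a b) a b Hab eq_refl).
Qed.

End CommonCoarsening.

Lemma full_size_all (K : Type) : full_size (fun _ : K => True).
Proof.
  exists (@proj1_sig K (fun _ => True)); split.
  - intros [x []] [y []]; simpl; intros ->; reflexivity.
  - intro k; exists (exist _ k I); reflexivity.
Qed.

Theorem proposition2p2 (K : Type) (lt : K -> K -> Prop) (N M Th : Type)
  (p : K -> K -> M) (c : K -> K -> Th) (q : K -> K -> N) :
  is_cardinal K lt ->
  coarsening lt q p -> coarsening lt q c -> nonconstant lt q ->
  ~ witnesses lt p c.
Proof.
  intros _ coarse_p coarse_c q_nonconstant W.
  destruct (avoiding_colouring_exists coarse_p coarse_c q_nonconstant)
    as [tau Htau].
  destruct (W _ (full_size_all K) tau) as [a [b [_ [_ [Hab Hc]]]]].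
  exact (Htau a b Hab Hc).
Qed.
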